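(* In the procedure of obtaining a 2-swap optimal solution for $P2\|C_{\max}$ with $n$ jobs (i.e., repeatedly replacing the current schedule by an improving 2-swap neighbor), the critical machine changes at most $O(n^2)$ times.
   Context: Problem $P2\|C_{\max}$: $n$ jobs with processing times $p_j>0$, two identical machines. A schedule $\sigma=(M_1,M_2)$ partitions the jobs into sets processed on machines 1 and 2; loads $L_i=\sum_{j\in M_i}p_j$, makespan $\max_iL_i$; a machine whose load equals the makespan is critical. A 2-swap neighbor is obtained by choosing $k'$ jobs on one machine and $k''$ on the other with $k'+k''\le2$ and interchanging their machine assignments; it is improving if its makespan is strictly smaller. A 2-swap optimal solution has no improving 2-swap neighbor. *)

(* Two machines are encoded by bool: true = machine 1, false = machine 2.
   A schedule is an assignment of each job 'I_n to a machine. *)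
From HB Require Import structures.
From mathcomp Require Import all_boot all_order all_algebra.
Set Implicit Arguments. Unset Strict Implicit. Unset Printing Implicit Defensive.
Import Order.TTheory GRing.Theory Num.Theory.
Local Open Scope ring_scope.

Definition schedule (n : nat) := {ffun 'I_n -> bool}.

Definition load (R : realFieldType) (n : nat) (p : 'I_n -> R) (s : schedule n) (b : bool) : R :=
  \sum_(j < n | s j == b) p j.

Definition makespan (R : realFieldType) (n : nat) (p : 'I_n -> R) (s : schedule n) : R :=
  Num.max (load p s true) (load p s false).

Definition critical (R : realFieldType) (n : nat) (p : 'I_n -> R) (s : schedule n) (b : bool) : bool :=
  load p s b == makespan p s.

Definition two_swap_neighbor (n : nat) (s t : schedule n) : Prop :=
  exists A : {set 'I_n}, (#|A| <= 2)%N /\ forall j, t j = (if j \in A then ~~ s j else s j).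

Definition improving_two_swap (R : realFieldType) (n : nat) (p : 'I_n -> R) (s t : schedule n) : Prop :=
  two_swap_neighbor s t /\ makespan p t < makespan p s.

Definition critical_changes (R : realFieldType) (n : nat) (p : 'I_n -> R) (s t : schedule n) : bool :=
  [exists b : bool, critical p s b != critical p t b].

(** The makespan of a schedule is [(P + |D|) / 2], where [P] is the total
    processing time and [D = L_1 - L_2] the imbalance, so along an improving
    run [|D|] strictly decreases.  When the critical machine changes, [D]
    changes sign (weakly), hence the jump [|D_k - D_(k+1)|] equals
    [|D_k| + |D_(k+1)|]; these jumps therefore strictly decrease from one
    change to the next.  A 2-swap moves at most two jobs, so every jump is one
    of the at most [(2n+1)^2] values [|e_1 + e_2|] with each [e_i] either [0]
    or [± 2 p_j], one of which is [0]; so there are fewer than [(2n+1)^2]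
    changes. *)
From mathcomp Require Import all_boot all_order all_algebra.
From mathcomp Require Import lra zify.
Set Implicit Arguments. Unset Strict Implicit. Unset Printing Implicit Defensive.
Import Order.TTheory GRing.Theory Num.Theory.
Local Open Scope ring_scope.

Lemma normrB_mul_le0 (R : realDomainType) (x y : R) :
  x * y <= 0 -> `|x - y| = `|x| + `|y|.
Proof.
move=> xy_le0.
have [hx|hx] := leP 0 x; have [hy|hy] := leP 0 y; have [hd|hd] := leP 0 (x - y);
  rewrite ?(ger0_norm hx) ?(ltr0_norm hx) ?(ger0_norm hy) ?(ltr0_norm hy)
          ?(ger0_norm hd) ?(ltr0_norm hd); nra.
Qed.

Lemma count_decreasing_lt_size d (T : porderType d) (P : pred nat) (u : nat -> T)
    (V : seq T) (v0 : T) (m : nat) :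
  v0 \in V ->
  (forall k, (k < m)%N -> P k -> u k \in V) ->
  (forall k, (k < m)%N -> P k -> (v0 < u k)%O) ->
  (forall k k', (k < k' < m)%N -> P k -> P k' -> (u k' < u k)%O) ->
  (count P (iota 0 m) < size V)%N.
Proof.
move=> v0V uV u_gt_v0 u_decr; rewrite -size_filter.
set ks := filter P (iota 0 m).
have ksP k : k \in ks -> P k && (k < m)%N by rewrite mem_filter mem_iota.
have u_inj : {in ks &, injective u}.
  move=> k k' /ksP /andP [Pk km] /ksP /andP [Pk' k'm] ukk'.
  case: (ltngtP k k') => // [kk'|k'k].
  - by have := u_decr k k'; rewrite kk' k'm ukk' ltxx => /(_ isT Pk Pk').
  - by have := u_decr k' k; rewrite k'k km ukk' ltxx => /(_ isT Pk' Pk).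
have uniq_vals : uniq (v0 :: map u ks).
  rewrite /= (map_inj_in_uniq u_inj) filter_uniq ?iota_uniq // andbT.
  apply/mapP => -[k /ksP /andP [Pk km] v0E].
  by have := u_gt_v0 k km Pk; rewrite -v0E ltxx.
have vals_sub : {subset v0 :: map u ks <= V}.
  move=> x; rewrite inE => /predU1P [-> //|/mapP [k /ksP /andP [Pk km] ->]].
  exact: uV.
by have := uniq_leq_size uniq_vals vals_sub; rewrite /= size_map.
Qed.

Section Imbalance.

Variables (R : realFieldType) (n : nat) (p : 'I_n -> R).
Implicit Types (s t : schedule n).

Definition imbalance s : R := load p s true - load p s false.

Definition signed_time s j : R := if s j then p j else - p j.

Lemma imbalanceE s : imbalance s = \sum_j signed_time s j.
Proof.
rewrite /imbalance /load !(big_mkcond (fun j => s j == _)) -sumrB.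
by apply: eq_bigr => j _; rewrite /signed_time; case: (s j); rewrite ?subr0 ?sub0r.
Qed.

Lemma load_true_add_false s : load p s true + load p s false = \sum_j p j.
Proof.
rewrite /load [RHS](bigID (fun j => s j)) /=.
by congr (_ + _); apply: eq_bigl => j; case: (s j).
Qed.

Lemma makespanE s : makespan p s = (\sum_j p j + `|imbalance s|) / 2.
Proof. by rewrite /makespan maxr_absE load_true_add_false. Qed.

Lemma makespan_lt s t :
  (makespan p t < makespan p s) = (`|imbalance t| < `|imbalance s|).
Proof. by rewrite !makespanE ltr_pM2r ?invr_gt0 // ltrD2l. Qed.

Lemma critical_imbalance s b :
  critical p s b = if b then 0 <= imbalance s else imbalance s <= 0.
Proof.
rewrite /critical /makespan /imbalance eq_sym.
by case: b; rewrite ?eq_maxl ?eq_maxr ?subr_ge0 ?subr_le0.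
Qed.

Lemma critical_changes_imbalance s t :
  critical_changes p s t -> imbalance s * imbalance t <= 0.
Proof.
case/existsP => -[]; rewrite !critical_imbalance.
- by case: (leP 0 (imbalance s)); case: (leP 0 (imbalance t)) => //= *; nra.
- by case: (leP (imbalance s) 0); case: (leP (imbalance t) 0) => //= *; nra.
Qed.

Lemma imbalance_flip s t (A : {set 'I_n}) :
  (forall j, t j = if j \in A then ~~ s j else s j) ->
  imbalance s - imbalance t = \sum_(j in A) signed_time s j *+ 2.
Proof.
move=> tE; rewrite !imbalanceE -sumrB (bigID (mem A)) /=.
rewrite [X in _ + X]big1 ?addr0 => [|j jNA]; last by rewrite /signed_time tE (negbTE jNA) subrr.
apply: eq_bigr => j jA; rewrite /signed_time tE jA.
by case: (s j) => /=; rewrite ?opprK mulr2n.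
Qed.

(** [Some (j, b)]: job [j] leaves machine [b] ([true] is machine 1). *)
Definition move_drop (o : option ('I_n * bool)) : R :=
  if o is Some (j, b) then (if b then p j else - p j) *+ 2 else 0.

Definition imbalance_jumps : seq R :=
  [seq `|move_drop o.1 + move_drop o.2|
  | o <- enum {: option ('I_n * bool) * option ('I_n * bool)}].

Lemma size_imbalance_jumps : size imbalance_jumps = ((2 * n).+1 ^ 2)%N.
Proof.
rewrite size_map -cardT card_prod card_option card_prod card_ord card_bool.
lia.
Qed.

Lemma zero_in_imbalance_jumps : 0 \in imbalance_jumps.
Proof.
by apply/mapP; exists (None, None); rewrite ?mem_enum //= addr0 normr0.
Qed.

Lemma two_swap_jump s t :
  two_swap_neighbor s t -> `|imbalance s - imbalance t| \in imbalance_jumps.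
Proof.
case=> A [A_le2 tE]; rewrite (imbalance_flip tE).
suff [o ->] : exists o, \sum_(j in A) signed_time s j *+ 2 = move_drop o.1 + move_drop o.2.
  by apply/mapP; exists o; rewrite ?mem_enum.
move: A_le2; case A_card: #|A| => [|[|[|c]]] // _.
- by exists (None, None); rewrite (cards0_eq A_card) big_set0 /= addr0.
- have /cards1P [j ->] : #|A| == 1%N by rewrite A_card.
  by exists (Some (j, s j), None); rewrite big_set1 /= addr0.
- have /cards2P [i [j [ij ->]]] : #|A| == 2%N by rewrite A_card.
  by exists (Some (i, s i), Some (j, s j)); rewrite big_setU1 ?big_set1 ?in_set1.
Qed.

End Imbalance.

Section ImprovingRun.

Variables (R : realFieldType) (n : nat) (p : 'I_n -> R).
Variables (m : nat) (s : nat -> schedule n).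
Hypothesis improving : forall k, (k < m)%N -> improving_two_swap p (s k) (s k.+1).

Let change k := critical_changes p (s k) (s k.+1).
Let dev k := `|imbalance p (s k)|.
Let jump k := `|imbalance p (s k) - imbalance p (s k.+1)|.

Lemma imbalance_norm_decreasing i j : (i < j <= m)%N -> dev j < dev i.
Proof.
case/andP => ij jm; have im : (i <= m)%N by rewrite ltnW ?(leq_trans ij).
apply: (@homo_ltn_in _ [pred k | k <= m]%N _ (fun x y => y < x)) => //.
- by move=> y x z xy yz; apply: lt_trans yz xy.
- by move=> a b _; rewrite inE => bm c /andP [_ cb]; rewrite inE ltnW ?(leq_trans cb).
- by move=> k _; rewrite inE => km; have [_] := improving km; rewrite makespan_lt.
Qed.

Lemma jump_change k : (k < m)%N -> change k -> jump k = dev k + dev k.+1.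
Proof. by move=> _ /critical_changes_imbalance; apply: normrB_mul_le0. Qed.

Lemma jump_change_gt0 k : (k < m)%N -> change k -> 0 < jump k.
Proof.
move=> km ck; rewrite jump_change //.
have := imbalance_norm_decreasing (i := k) (j := k.+1); rewrite ltnSn km.
by move=> /(_ isT); have := normr_ge0 (imbalance p (s k.+1)); rewrite /dev; lra.
Qed.

Lemma jump_change_decreasing k k' :
  (k < k' < m)%N -> change k -> change k' -> jump k' < jump k.
Proof.
case/andP => kk' k'm ck ck'; rewrite !jump_change ?(ltn_trans kk') //.
have dev_k' : dev k' <= dev k.+1.
  move: kk'; rewrite leq_eqVlt => /orP [/eqP -> //|kk'].
  by apply/ltW/imbalance_norm_decreasing; rewrite kk' ltnW.
have := imbalance_norm_decreasing (i := k) (j := k.+1).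
have := imbalance_norm_decreasing (i := k') (j := k'.+1).
by rewrite !ltnSn k'm (ltn_trans kk' k'm) => /(_ isT) ? /(_ isT) ?; lra.
Qed.

Lemma count_critical_changes_lt :
  (count change (iota 0 m) < (2 * n).+1 ^ 2)%N.
Proof.
rewrite -(size_imbalance_jumps p).
apply: (count_decreasing_lt_size (u := jump) (zero_in_imbalance_jumps p)).
- by move=> k km _; have [swap _] := improving km; exact: two_swap_jump.
- exact: jump_change_gt0.
- exact: jump_change_decreasing.
Qed.

End ImprovingRun.

Theorem lemma6 :
  exists C : nat,
  forall (R : realFieldType) (n : nat) (p : 'I_n -> R),
    (forall j, 0 < p j) ->
    forall (m : nat) (s : nat -> schedule n),
      (forall k, (k < m)%N -> improving_two_swap p (s k) (s k.+1)) ->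
      (count (fun k => critical_changes p (s k) (s k.+1)) (iota 0 m) <= C * n ^ 2)%N.
Proof.
(* The argument works for arbitrary real processing times. *)
exists 8%N => R n p _ m s improving.
have := count_critical_changes_lt improving.
nia.
Qed.
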